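(* For every integer $t\ge1$, $\liminf_{n\to\infty}\frac{\mathrm{orsat}(n,K_{t+2})}{n^{3/2}}=\frac{\sqrt t}{2}$.
   Context: All graphs are finite and simple. A graph is regular if all vertices have the same degree. For a graph $F$, a graph $G$ is $F$-oversaturated if for every pair $e$ of non-adjacent vertices of $G$, the graph obtained from $G$ by adding the edge $e$ contains a copy of $F$ that uses the edge $e$ ($G$ itself need not be $F$-free). $\mathrm{orsat}(n,F)$ denotes the smallest number of edges of a regular $n$-vertex $F$-oversaturated graph. $K_r$ denotes the complete graph on $r$ vertices. *)

From mathcomp Require Import all_boot all_order.
From mathcomp Require Import boolp.
Set Implicit Arguments. Unset Strict Implicit. Unset Printing Implicit Defensive.

Definition simple_graph n (e : rel 'I_n) : Prop :=
  (forall u v, e u v = e v u) /\ (forall u, ~~ e u u).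

Definition nedges n (e : rel 'I_n) : nat :=
  #|[set p : 'I_n * 'I_n | (p.1 < p.2) && e p.1 p.2]|.

Definition regular n (e : rel 'I_n) : Prop :=
  exists d, forall v : 'I_n, #|[set w | e v w]| = d.

Definition add_edge n (e : rel 'I_n) (x y : 'I_n) : rel 'I_n :=
  fun u v => [|| e u v, (u == x) && (v == y) | (u == y) && (v == x)].

Definition has_Kr_using n (r : nat) (e : rel 'I_n) (x y : 'I_n) : Prop :=
  exists f : 'I_r -> 'I_n,
    injective f /\
    (forall i j, i != j -> add_edge e x y (f i) (f j)) /\
    (exists i j, f i = x /\ f j = y).

Definition Kr_oversaturated n (r : nat) (e : rel 'I_n) : Prop :=
  forall x y : 'I_n, x != y -> ~~ e x y -> has_Kr_using r e x y.

Definition orsat_pred (r n m : nat) : Prop :=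
  exists e : rel 'I_n,
    [/\ simple_graph e, regular e, Kr_oversaturated r e & nedges e = m].

Lemma orsat_exists r n : exists m, `[< orsat_pred r n m >].
Proof.
exists (nedges (fun u v : 'I_n => u != v)); apply/asboolP.
exists (fun u v : 'I_n => u != v); split => //.
- split => [u v|u]; [by rewrite eq_sym | by rewrite eqxx].
- exists #|'I_n|.-1 => v; rewrite -(cardsC1 v); apply: eq_card => w.
  by rewrite !inE eq_sym.
- by move=> x y -> .
Qed.

Definition orsat (n r : nat) : nat := ex_minn (orsat_exists r n).

(* Lower bound: in a d-regular K_(t+2)-oversaturated graph every non-adjacent
   pair has at least t common neighbours, so counting paths of length two gives
   t (n - 1 - d) <= d (d - 1).  Hence d >= sqrt(t n) - O(1), and the graph has
   n d / 2 >= (sqrt t / 2 - o(1)) n^(3/2) edges.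

   Upper bound: pair up the p + 1 absolute points of the Erdos-Renyi polarity
   graph ER_p (p an odd prime) and replace every vertex by a t-clique, joining
   two cliques when their vertices are adjacent, equal or paired.  Any two
   non-adjacent points of ER_p have a common neighbour w, whose clique completes
   a non-edge to a K_(t+2).  The result is ((p + 2) t - 1)-regular on
   n = (p^2 + p + 1) t vertices, i.e. it has (sqrt t / 2 + O(1/p)) n^(3/2)
   edges. *)

From mathcomp Require Import all_boot all_order all_algebra.
From mathcomp Require Import all_classical all_reals all_analysis.
From mathcomp Require Import zify ring lra.
Import Order.TTheory GRing.Theory Num.Theory.
Set Implicit Arguments. Unset Strict Implicit. Unset Printing Implicit Defensive.

Lemma card_rel_pairs (T : finType) (P : rel T) :
  #|[set q : T * T | P q.1 q.2]| = \sum_x #|[set y | P x y]|.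
Proof.
rewrite -sum1_card big_mkcond /=.
under eq_bigr => q _ do rewrite inE.
rewrite -(pair_big predT predT (fun x y => if P x y then 1 else 0)) /=.
apply: eq_bigr => x _; rewrite -sum1_card [RHS]big_mkcond /=.
by apply: eq_bigr => y _; rewrite inE.
Qed.

Section Codegree.
Variables (T : finType) (e : rel T) (d : nat).
Hypothesis e_irr : irreflexive e.
Hypothesis e_reg : forall x, #|[set y | e x y]| = d.

Definition codegree (x y : T) := #|[set w | e w x && e w y]|.

Lemma sum_pairs_of_neighbours w :
  \sum_x \sum_(y | x != y) ((e w x && e w y) : nat) = d * (d - 1).
Proof.
rewrite (bigID (e w)) /= [X in _ + X]big1 ?addn0; last first.
  by move=> x /negbTE ->; rewrite big1.
rewrite (eq_bigr (fun _ => d - 1)) => [|x ewx].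
  rewrite sum_nat_const -(e_reg w); congr (_ * _).
  by apply: eq_card => x; rewrite inE.
have := cardsD1 x [set y | e w y]; rewrite inE ewx e_reg add1n => ->.
rewrite subn1 /= -sum1_card big_mkcond [RHS]big_mkcond /=; apply: eq_bigr => y _.
by rewrite !inE eq_sym; case: (y == x); case: (e w y).
Qed.

Lemma sum_codegree :
  \sum_x \sum_(y | x != y) codegree x y = #|T| * (d * (d - 1)).
Proof.
transitivity (\sum_w \sum_x \sum_(y | x != y) ((e w x && e w y) : nat)).
  rewrite exchange_big /=; apply: eq_bigr => x _.
  rewrite exchange_big /=; apply: eq_bigr => y _.
  rewrite /codegree -sum1_card big_mkcond /=.
  by apply: eq_bigr => w _; rewrite inE; case: (_ && _).
by rewrite (eq_bigr _ (fun w _ => sum_pairs_of_neighbours w)) sum_nat_const.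
Qed.

Lemma card_non_neighbours x : #|[set y | (x != y) && ~~ e x y]| = #|T| - 1 - d.
Proof.
have := cardsC (x |: [set y | e x y]).
rewrite cardsU1 inE e_irr e_reg add1n => <-.
rewrite subn1 addSn /= addKn; apply: eq_card => y.
by rewrite !inE negb_or eq_sym.
Qed.

Lemma codegree_bound t :
    (forall x y, x != y -> ~~ e x y -> t <= codegree x y) ->
  t * (#|T| - 1 - d) <= d * (d - 1).
Proof.
move=> codeg_ge; have [->|n_gt0] := posnP #|T|; first by rewrite muln0.
rewrite -(leq_pmul2l n_gt0) -sum_codegree.
have -> : #|T| * (t * (#|T| - 1 - d)) = \sum_x \sum_(y | (x != y) && ~~ e x y) t.
  rewrite -sum_nat_const; apply: eq_bigr => x _.
  by rewrite sum_nat_const -(card_non_neighbours x) cardsE mulnC.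
apply: leq_sum => x _; rewrite [X in _ <= X](bigID (fun y => ~~ e x y)) /=.
apply: leq_trans (leq_addr _ _); apply: leq_sum => y /andP[].
exact: codeg_ge.
Qed.
End Codegree.

Lemma simple_graph_sym n (e : rel 'I_n) : simple_graph e -> symmetric e.
Proof. by case. Qed.

Lemma simple_graph_irr n (e : rel 'I_n) : simple_graph e -> irreflexive e.
Proof. by move=> [_ e_irr] x; apply: negbTE. Qed.

Lemma nedges_regular n (e : rel 'I_n) d : simple_graph e ->
  (forall x, #|[set y | e x y]| = d) -> (nedges e).*2 = n * d.
Proof.
move=> [e_sym e_irr] e_reg.
have <- : #|[set q : 'I_n * 'I_n | e q.1 q.2]| = n * d.
  by rewrite card_rel_pairs (eq_bigr _ (fun x _ => e_reg x)) sum_nat_const card_ord.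
rewrite -(cardsID [set q : 'I_n * 'I_n | q.1 < q.2]) -addnn; congr (_ + _).
  by apply: eq_card => q; rewrite !inE andbC.
pose swap (q : 'I_n * 'I_n) := (q.2, q.1).
have swapK : involutive swap by case.
rewrite -(card_preimset _ (inv_inj swapK)); apply: eq_card => -[x y].
rewrite !inE /= e_sym; case: (ltngtP x y) => //= xy.
by rewrite (val_inj xy) (negbTE (e_irr y)).
Qed.

Lemma oversaturated_codegree n t (e : rel 'I_n) x y :
    Kr_oversaturated t.+2 e -> x != y -> ~~ e x y ->
  t <= codegree e x y.
Proof.
move=> ov xy nexy; have [f [f_inj [f_adj [i [j [fi fj]]]]]] := ov x y xy nexy.
have ij : i != j by apply: contraNneq xy => ij; rewrite -fi -fj ij.
have card_rest : #|~: [set i; j]| = t.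
  by have := cardsC [set i; j]; rewrite cards2 ij card_ord; lia.
rewrite -card_rest -(card_imset _ f_inj); apply: subset_leq_card.
apply/fintype.subsetP => z /imsetP[k]; rewrite !inE negb_or => /andP[ki kj] ->.
have fkx : f k != x by rewrite -fi (inj_eq f_inj).
have fky : f k != y by rewrite -fj (inj_eq f_inj).
move: (f_adj k i ki) (f_adj k j kj).
by rewrite /add_edge fi fj (negbTE fkx) (negbTE fky) !orbF => -> ->.
Qed.

Lemma orsat_min n r m : orsat_pred r n m -> orsat n r <= m.
Proof. by rewrite /orsat; case: ex_minnP => k _ /(_ m) min_k /asboolP/min_k. Qed.

Lemma orsat_degree n t : exists d,
  (orsat n t.+2).*2 = n * d /\ t * (n - 1 - d) <= d * (d - 1).
Proof.
rewrite /orsat; case: ex_minnP => m /asboolP[e [e_simple [d e_reg] ov <-]] _.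
exists d; split; first exact: nedges_regular.
have := codegree_bound (simple_graph_irr e_simple) e_reg.
rewrite card_ord; apply=> x y xy nexy.
exact: oversaturated_codegree.
Qed.

Lemma add_edge_irr n (e : rel 'I_n) x y z :
  irreflexive e -> x != y -> add_edge e x y z z = false.
Proof.
move=> e_irr xy; rewrite /add_edge e_irr /=.
by apply/norP; split; apply: contraNN xy => /andP[/eqP <- /eqP <-].
Qed.

Lemma Kr_using_of_common_clique n t (e : rel 'I_n) x y (h : 'I_t -> 'I_n) :
    simple_graph e -> x != y ->
    (forall i j, i != j -> e (h i) (h j)) -> (forall i, e x (h i) && e y (h i)) ->
  has_Kr_using t.+2 e x y.
Proof.
move=> e_simple xy h_clique h_common.
pose f (k : 'I_t.+2) := match fintype.split (k : 'I_(2 + t)) with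
  | inl a => if a == ord0 then x else y
  | inr b => h b end.
have f_adj k l : k != l -> add_edge e x y (f k) (f l).
  have split_inj : injective (@fintype.split 2 t) := can_inj (@splitK 2 t).
  move=> /(contra_neq (@split_inj k l)); rewrite /f /add_edge.
  case: fintype.split => [a|b]; case: fintype.split => [a'|b'] a_a'.
  - case: a a' a_a' => [[|[|//]] ?] [[|[|//]] ?] //= _; first by rewrite !eqxx orbT.
    by rewrite !eqxx !orbT.
  - by case/andP: (h_common b') => hx hy; case: (a == ord0); rewrite ?hx ?hy.
  - case/andP: (h_common b) => hx hy.
    by case: (a' == ord0); rewrite (simple_graph_sym e_simple) ?hx ?hy.
  - by rewrite h_clique //; apply: contraNneq a_a' => ->.
exists f; split; last split=> //.
  move=> k l fkl; apply/eqP; apply: contraFT (f_adj k l) _.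
  by rewrite fkl; apply: add_edge_irr (simple_graph_irr e_simple) xy.
exists (lshift t (ord0 : 'I_2)), (lshift t (ord_max : 'I_2)).
by rewrite /f !(unsplitK (inl _)).
Qed.

Lemma orsat_le_common_clique (V : finType) t (g : rel V) D :
    symmetric g -> irreflexive g -> (forall x, #|[set y | g x y]| = D) ->
    (forall x y, x != y -> ~~ g x y -> exists h : 'I_t -> V,
       (forall i j, i != j -> g (h i) (h j)) /\ (forall i, g x (h i) && g y (h i))) ->
  (orsat #|V| t.+2).*2 <= #|V| * D.
Proof.
move=> g_sym g_irr g_reg g_clique.
pose e : rel 'I_#|V| := fun u v => g (enum_val u) (enum_val v).
have e_simple : simple_graph e.
  by split=> [u v|u]; [exact: g_sym | exact/negbT/g_irr].
have e_reg u : #|[set v | e u v]| = D.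
  rewrite -(g_reg (enum_val u)) -(card_imset _ (@enum_val_inj _ _)).
  apply: eq_card => y; rewrite inE; apply/imsetP/idP => [[v] | guy].
    by rewrite inE => euv ->.
  by exists (enum_rank y); rewrite ?inE /e enum_rankK.
rewrite -(nedges_regular e_simple e_reg) leq_double; apply: orsat_min.
exists e; split=> //; first by exists D.
move=> x y xy nexy.
have xy' : enum_val x != enum_val y by rewrite (inj_eq enum_val_inj).
have [h [h_clique h_common]] := g_clique _ _ xy' nexy.
apply: (@Kr_using_of_common_clique _ _ _ _ _ (enum_rank \o h)) => // [i j ij | i].
  by rewrite /e /= !enum_rankK h_clique.
by rewrite /e /= !enum_rankK.
Qed.

Section BlowUp.
Variables (V : finType) (B : rel V) (k t : nat).
Hypotheses (B_refl : reflexive B) (B_sym : symmetric B).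
Hypothesis B_reg : forall x, #|[set y | B x y]| = k.
Hypothesis B_common : forall x y, ~~ B x y -> exists w, B x w && B y w.

Definition blowup (u v : V * 'I_t) := (u != v) && B u.1 v.1.

Lemma blowup_sym : symmetric blowup.
Proof. by move=> u v; rewrite /blowup eq_sym B_sym. Qed.

Lemma blowup_irr : irreflexive blowup.
Proof. by move=> u; rewrite /blowup eqxx. Qed.

Lemma blowup_degree u : #|[set v | blowup u v]| = (k * t).-1.
Proof.
have := cardsD1 u (finset.setX [set y | B u.1 y] [set: 'I_t]).
rewrite cardsX B_reg cardsT card_ord !inE B_refl => ->.
by apply: eq_card => v; rewrite !inE andbT eq_sym.
Qed.

Lemma blowup_common_clique u v : u != v -> ~~ blowup u v ->
  exists h : 'I_t -> V * 'I_t,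
    (forall i j, i != j -> blowup (h i) (h j)) /\
    (forall i, blowup u (h i) && blowup v (h i)).
Proof.
rewrite /blowup => -> /= nBuv; have [w /andP[Buw Bvw]] := B_common nBuv.
have wu : w != u.1 by apply: contraNneq nBuv => wu; rewrite B_sym -wu.
have wv : w != v.1 by apply: contraNneq nBuv => wv; rewrite -wv.
exists (pair w); split=> [i j ij | i] /=.
  by rewrite xpair_eqE negb_and ij orbT B_refl.
have neq_pair z : w != z.1 -> z != (w, i) by move=> wz; apply: contraNneq wz => ->.
by rewrite Buw Bvw !neq_pair.
Qed.

Lemma orsat_blowup : (orsat (#|V| * t) t.+2).*2 <= #|V| * t * (k * t).-1.
Proof.
have := orsat_le_common_clique blowup_sym blowup_irr blowup_degree blowup_common_clique.
by rewrite card_prod card_ord.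
Qed.

End BlowUp.

Section PolarityGraph.
Local Open Scope ring_scope.
Variable p : nat.
Hypotheses (p_pr : prime p) (p_gt2 : (2 < p)%N).

(* The Erdos-Renyi polarity graph ER_p on the points of PG(2, p): affine points
   (a, b), points at infinity [Some m], and the point [None]; (a, b) and (c, d)
   are adjacent iff ac = b + d.  The loops are the p + 1 absolute points. *)
Definition er_vertex := (('F_p * 'F_p) + option 'F_p)%type.

Definition er_adj (x y : er_vertex) : bool :=
  match x, y with
  | inl (a, b), inl (c, d) => a * c == b + d
  | inl (a, _), inr (Some m) | inr (Some m), inl (a, _) => a == m
  | inl _, inr None | inr None, inl _ | inr (Some _), inr (Some _) => false
  | inr _, inr _ => true
  end.

Lemma er_adj_sym : symmetric er_adj.
Proof. by case=> [[a b]|[m|]] [[c d]|[m'|]] //=; rewrite mulrC addrC. Qed.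

Definition er_nbr (x : er_vertex) (o : option 'F_p) : er_vertex :=
  match x, o with
  | inl (a, b), Some c => inl (c, a * c - b)
  | inl (a, _), None | inr None, Some a => inr (Some a)
  | inr (Some m), Some b => inl (m, b)
  | inr _, None => inr None
  end.

Lemma er_nbr_inj x : injective (er_nbr x).
Proof. by case: x => [[a b]|[m|]] [c|] [c'|] //= [->]. Qed.

Lemma er_nbrsE x : [set y | er_adj x y] = [set er_nbr x o | o : option 'F_p].
Proof.
apply/setP => y; rewrite inE; apply/idP/imsetP.
- case: x => [[a b]|[m|]]; case: y => [[c d]|[m'|]] //=.
  + move/eqP => acbd; exists (Some c) => //.
    by rewrite /= acbd [b + d]addrC addrK.
  + by move/eqP => <-; exists None.
  + by move/eqP => ->; exists (Some d).
  + by exists None.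
  + by exists (Some m').
  + by exists None.
- case=> o _ ->; case: x => [[a b]|[m|]]; case: o => [c|] //=.
  by rewrite addrC subrK.
Qed.

Lemma card_er_nbrs x : #|[set y | er_adj x y]| = p.+1.
Proof.
by rewrite er_nbrsE card_imset ?cardsT ?card_option ?card_Fp //; exact: er_nbr_inj.
Qed.

Lemma Fp_double_eq0 (a : 'F_p) : a + a = 0 -> a = 0.
Proof.
move/eqP; rewrite -mulr2n -mulr_natl mulf_eq0 -(dvdn_pcharf (pchar_Fp p_pr)).
by case/orP=> [/(@dvdn_leq p 2 isT)|/eqP//]; rewrite leqNgt p_gt2.
Qed.

(* An involution pairing the absolute points: (a, b) with (-a, b), and (0, 0)
   with [None]. *)
Definition er_mate (x : er_vertex) : er_vertex :=
  match x with
  | inl (a, b) => if a == 0 then inr None else inl (- a, b)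
  | inr None => inl (0, 0)
  | inr (Some m) => inr (Some m)
  end.

Lemma er_mate_absolute x : er_adj x x ->
  [/\ er_adj (er_mate x) (er_mate x), er_mate (er_mate x) = x
    & ~~ er_adj x (er_mate x)].
Proof.
case: x => [[a b]|[m|]] //= /eqP aab.
have [a0|/negPf a0] := eqVneq a 0.
  have b0 : b = 0 by apply: Fp_double_eq0; rewrite -aab a0 mulr0.
  by rewrite a0 b0.
rewrite /= oppr_eq0 a0 opprK mulrNN aab eqxx; split=> //.
apply: contraFN a0 => /eqP ab; apply/eqP.
have /Fp_double_eq0/eqP : a * a + a * a = 0 by rewrite {1}aab -ab mulrN addrC subrr.
by rewrite mulf_eq0 orbb => /eqP.
Qed.

Definition er_matched (x y : er_vertex) := er_adj x x && (y == er_mate x).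

Lemma er_matched_sym : symmetric er_matched.
Proof.
suff imp x y : er_matched x y -> er_matched y x by move=> x y; apply/idP/idP=> /imp.
case/andP=> xx /eqP ->; have [mm mmK _] := er_mate_absolute xx.
by rewrite /er_matched mm mmK eqxx.
Qed.

(* Closed neighbourhoods of absolute points have only p + 1 elements; adding
   the mate makes every block have p + 2. *)
Definition er_block (x y : er_vertex) := [|| y == x, er_adj x y | er_matched x y].

Lemma er_block_refl : reflexive er_block.
Proof. by move=> x; rewrite /er_block eqxx. Qed.

Lemma er_block_sym : symmetric er_block.
Proof. by move=> x y; rewrite /er_block eq_sym er_adj_sym er_matched_sym. Qed.

Lemma card_er_block x : #|[set y | er_block x y]| = p.+2.
Proof.
rewrite /er_block /er_matched; have [xx|/negPf xx] := boolP (er_adj x x).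
  have [_ _ x_mate] := er_mate_absolute xx.
  have -> : [set y | [|| y == x, er_adj x y | y == er_mate x]] =
            er_mate x |: [set y | er_adj x y].
    apply/setP => y; rewrite !inE; have [->|_] := eqVneq y x; first by rewrite xx !orbT.
    by rewrite /= orbC.
  by rewrite cardsU1 inE (negPf x_mate) card_er_nbrs.
have -> : [set y | [|| y == x, er_adj x y | false && (y == er_mate x)]] =
          x |: [set y | er_adj x y].
  by apply/setP => y; rewrite !inE orbF.
by rewrite cardsU1 inE xx card_er_nbrs.
Qed.

Lemma er_common_nbr x y : x != y -> ~~ er_adj x y -> exists w, er_adj x w && er_adj y w.
Proof.
case: x => [[a b]|[m|]]; case: y => [[c d]|[m'|]] //= xy nxy.
- have [ac|ac] := eqVneq a c.
    by exists (inr (Some a)); rewrite /= eqxx ac eqxx.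
  pose u := (b - d) / (a - c).
  exists (inl (u, a * u - b)); rewrite /= addrCA subrr addr0 eqxx /=.
  by apply/eqP; rewrite /u; field; rewrite subr_eq0.
- by exists (inl (m', a * m' - b)); rewrite /= addrCA subrr addr0 !eqxx.
- by exists (inr (Some a)); rewrite /= eqxx.
- by exists (inl (m, c * m - d)); rewrite /= addrCA subrr addr0 !eqxx.
- by exists (inr None).
- by exists (inr (Some c)); rewrite /= eqxx.
Qed.

Lemma er_block_common x y : ~~ er_block x y -> exists w, er_block x w && er_block y w.
Proof.
rewrite /er_block eq_sym => /norP[xy /norP[nxy _]].
have [w /andP[xw yw]] := er_common_nbr xy nxy.
by exists w; rewrite xw yw !orbT.
Qed.

Lemma orsat_er t :
  ((orsat ((p * p + p.+1) * t) t.+2).*2 <= (p * p + p.+1) * t * (p.+2 * t).-1)%N.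
Proof.
have := orsat_blowup t er_block_refl er_block_sym card_er_block er_block_common.
by rewrite card_sum card_prod card_option card_Fp.
Qed.
End PolarityGraph.

Local Open Scope ring_scope.

Section Asymptotics.
Variable R : realType.

Lemma limn_einf_eq_EFin (u : nat -> R) (l : R) :
    (forall e : R, 0 < e -> exists N, forall n, (N <= n)%N -> l - e <= u n) ->
    (forall e : R, 0 < e -> forall N, exists2 n, (N <= n)%N & u n <= l + e) ->
  limn_einf (fun n => (u n)%:E) = l%:E.
Proof.
move=> ev_ge fr_le; rewrite limn_einf_lim; apply/eqP; rewrite eq_le; apply/andP; split.
- apply: lime_le; first exact: is_cvg_einfs.
  apply: nearW => N; apply/lee_addgt0Pr => e e_gt0.
  have [n Nn un_le] := fr_le e e_gt0 N.
  apply: ge_ereal_inf; exists (u n)%:E; first by exists n.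
  by rewrite -EFinD lee_fin.
- apply/lee_subgt0Pr => e e_gt0; apply: lime_ge; first exact: is_cvg_einfs.
  have [N ge_un] := ev_ge e e_gt0.
  exists N => // m /= Nm; apply: le_ereal_inf_tmp => _ [n /= mn <-].
  by rewrite -EFinB lee_fin ge_un // (leq_trans Nm mn).
Qed.

Lemma powR32 (x : R) : 0 <= x -> x `^ (3 / 2) = x * Num.sqrt x.
Proof.
move=> x_ge0; have -> : (3 / 2 : R) = 1 + 2^-1 by field.
by rewrite powRD ?powRr1 ?powR12_sqrt //; apply/implyP => /eqP; lra.
Qed.

Lemma le_of_quadratic_lower_bound (q s d : R) : 0 <= q -> 1 <= s -> 0 <= d ->
  q ^+ 2 * (s ^+ 2 - 1 - d) <= d ^+ 2 -> q * s - q - q ^+ 2 / 2 <= d.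
Proof.
move=> q_ge0 s_ge1 d_ge0 quad.
(* (d + q^2/2)^2 >= d^2 + q^2 d >= q^2 (s^2 - 1) >= q^2 (s - 1)^2 *)
have : (q * (s - 1)) ^+ 2 <= (d + q ^+ 2 / 2) ^+ 2 by nra.
rewrite ler_sqr ?nnegrE; [lra | nra | nra].
Qed.

Definition orsat_ratio t n : R := (orsat n t.+2)%:R / n%:R `^ (3 / 2).

Lemma orsat_ratio_ge t n : (0 < n)%N ->
  Num.sqrt t%:R / 2 - (2 * Num.sqrt t%:R + t%:R) / (4 * Num.sqrt n%:R)
    <= orsat_ratio t n.
Proof.
move=> n_gt0; have [d [orsat_d codeg_ineq]] := orsat_degree n t.
set q := Num.sqrt t%:R; pose s : R := Num.sqrt n%:R.
have q_ge0 : 0 <= q := sqrtr_ge0 _.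
have s_gt0 : 0 < s by rewrite sqrtr_gt0 ltr0n.
have tq : t%:R = q ^+ 2 by rewrite sqr_sqrtr ?ler0n.
have ns : n%:R = s ^+ 2 by rewrite sqr_sqrtr ?ler0n.
have -> : orsat_ratio t n = d%:R / (2 * s).
  have orsatE : (orsat n t.+2)%:R = n%:R * d%:R / 2 :> R.
    by rewrite -natrM -orsat_d -muln2 natrM mulfK ?pnatr_eq0.
  by rewrite /orsat_ratio powR32 ?ler0n // orsatE -/s ns; field; rewrite gt_eqF.
have d_lb : q * s - q - q ^+ 2 / 2 <= d%:R.
  apply: le_of_quadratic_lower_bound; rewrite ?ler0n //.
    by rewrite -sqrtr1 ler_sqrt ?ler1n.
  have n_le : (n <= (n - 1 - d) + 1 + d)%N by lia.
  have codeg' : (t * (n - 1 - d) <= d * d)%N.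
    by apply: leq_trans codeg_ineq _; rewrite leq_mul2l leq_subr orbT.
  move: n_le codeg'; rewrite -!(ler_nat R) !natrD !natrM -tq -ns; nra.
have -> : q / 2 - (2 * q + t%:R) / (4 * s) = (q * s - q - q ^+ 2 / 2) / (2 * s).
  by rewrite tq; field; rewrite gt_eqF.
by apply: ler_wpM2r d_lb; rewrite invr_ge0; lra.
Qed.

Lemma sqrt_nat_eventually_ge (x : R) :
  exists N, forall n, (N <= n)%N -> x <= Num.sqrt n%:R.
Proof.
exists (Num.truncn (x ^+ 2)).+1 => n Nn.
have [x_le0|x_gt0] := lerP x 0; first exact: le_trans x_le0 (sqrtr_ge0 _).
rewrite -(ger0_norm (ltW x_gt0)) -sqrtr_sqr ler_sqrt ?ler0n //.
by apply: le_trans (ltW (truncnS_gt _)) _; rewrite ler_nat.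
Qed.

Lemma orsat_ratio_eventually_ge t e : 0 < e ->
  exists N, forall n, (N <= n)%N -> Num.sqrt t%:R / 2 - e <= orsat_ratio t n.
Proof.
move=> e_gt0; pose C : R := (2 * Num.sqrt t%:R + t%:R) / 4.
have [N le_sqrt] := sqrt_nat_eventually_ge (C / e).
exists N.+1 => n Nn; have n_gt0 : (0 < n)%N by apply: leq_trans Nn.
apply: le_trans (orsat_ratio_ge t n_gt0); rewrite lerD2l lerN2.
have s_gt0 : 0 < Num.sqrt n%:R :> R by rewrite sqrtr_gt0 ltr0n.
have := le_sqrt n (ltnW Nn); rewrite ler_pdivrMr // => C_le.
by rewrite ler_pdivrMr ?mulr_gt0 //; rewrite /C in C_le; lra.
Qed.

Lemma orsat_ratio_er_le p t : prime p -> (2 < p)%N -> (0 < t)%N ->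
  orsat_ratio t ((p * p + p.+1) * t) <= Num.sqrt t%:R / 2 + Num.sqrt t%:R / p%:R.
Proof.
move=> p_pr p_gt2 t_gt0; set n := ((p * p + p.+1) * t)%N.
have orsat_le : ((orsat n t.+2).*2 <= n * (p.+2 * t))%N.
  by apply: leq_trans (orsat_er p_pr p_gt2 t) _; rewrite leq_mul2l leq_pred orbT.
set q := Num.sqrt t%:R; pose s : R := Num.sqrt n%:R.
have q_gt0 : 0 < q by rewrite sqrtr_gt0 ltr0n.
have p_gt0 : 0 < p%:R :> R by rewrite ltr0n prime_gt0.
have n_gt0 : 0 < n%:R :> R by rewrite ltr0n muln_gt0 addn_gt0 ltn0Sn orbT.
have s_gt0 : 0 < s by rewrite sqrtr_gt0.
have tq : t%:R = q ^+ 2 by rewrite sqr_sqrtr ?ler0n.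
have ns : n%:R = s ^+ 2 by rewrite sqr_sqrtr ?ler0n.
have pq_le : p%:R * q <= s.
  have : (p%:R * q) ^+ 2 <= s ^+ 2.
    by rewrite exprMn -tq -ns -natrX -natrM ler_nat /n leq_mul2r leq_addr orbT.
  by rewrite ler_sqr ?nnegrE ?(ltW s_gt0) ?mulr_ge0 ?(ltW q_gt0) ?ler0n.
have key : p.+2%:R * q ^+ 2 / 2 <= (q / 2 + q / p%:R) * s.
  have -> : p.+2%:R * q ^+ 2 / 2 = (q / 2 + q / p%:R) * (p%:R * q).
    by rewrite -addn2 natrD; field; rewrite gt_eqF.
  by apply: ler_wpM2l pq_le; rewrite addr_ge0 ?divr_ge0 ?(ltW q_gt0) ?(ltW p_gt0).
have orsat_le' : (orsat n t.+2)%:R <= n%:R * (p.+2%:R * q ^+ 2 / 2) :> R.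
  move: orsat_le; rewrite -muln2 -(ler_nat R) !natrM -tq.
  by move=> h; rewrite mulrA ler_pdivlMr //; lra.
rewrite /orsat_ratio powR32 ?ler0n // -/s ler_pdivrMr ?mulr_gt0 //.
apply: le_trans orsat_le' _; rewrite [leRHS]mulrCA; apply: ler_wpM2l key; exact: ltW.
Qed.

Lemma orsat_ratio_frequently_le t e : (0 < t)%N -> 0 < e ->
  forall N, exists2 n, (N <= n)%N & orsat_ratio t n <= Num.sqrt t%:R / 2 + e.
Proof.
move=> t_gt0 e_gt0 N.
have [p] := prime_above (maxn N (maxn 2 (Num.truncn (Num.sqrt t%:R / e)))).
rewrite !gtn_max => /and3P[Np p_gt2 p_large] p_pr.
exists ((p * p + p.+1) * t)%N; first by nia.
apply: le_trans (orsat_ratio_er_le p_pr p_gt2 t_gt0) _; rewrite lerD2l.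
have : Num.sqrt t%:R / e < p%:R by apply: lt_le_trans (truncnS_gt _) _; rewrite ler_nat.
by rewrite ltr_pdivrMr // ler_pdivrMr ?ltr0n ?prime_gt0 // => /ltW; rewrite mulrC.
Qed.
End Asymptotics.

Theorem theorem1p5 (R : realType) (t : nat) : (1 <= t)%N ->
  limn_einf (fun n : nat =>
      (((orsat n t.+2)%:R / (n%:R `^ (3 / 2) : R)) : R)%:E)
  = (Num.sqrt (t%:R : R) / 2)%:E.
Proof.
move=> t_gt0; apply: limn_einf_eq_EFin => e e_gt0.
  exact: orsat_ratio_eventually_ge.
exact: orsat_ratio_frequently_le.
Qed.
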